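(* Let $\mathcal{H}$ be a complex Hilbert space, $A\in\mathcal{B}(\mathcal{H})$ positive and $S\in\mathcal{B}_A(\mathcal{H})$. Then $$d\omega_A^2(S)\le \omega_A^2\left(S^{\sharp_A}S+S\right)+\omega_A\left(S^{\sharp_A}S^2\right)+\frac12\left\|\left(S^{\sharp_A}S\right)^2+S^{\sharp_A}S\right\|_A .$$
   Context: $\mathcal{B}(\mathcal{H})$ denotes the bounded linear operators on $\mathcal{H}$. For positive $A$, $\langle x,z\rangle_A=\langle Ax,z\rangle$ and $\|z\|_A=\|A^{1/2}z\|$. $\mathcal{B}_A(\mathcal{H})$ is the set of $S\in\mathcal{B}(\mathcal{H})$ for which some $R\in\mathcal{B}(\mathcal{H})$ satisfies $AR=S^*A$; for such $S$, $S^{\sharp_A}=A^{\dagger}S^*A$ with $A^\dagger$ the Moore–Penrose inverse of $A$. For operators $T$ bounded with respect to $\|\cdot\|_A$: $\|T\|_A=\sup_{\|z\|_A=1}\|Tz\|_A$, $\omega_A(T)=\sup_{\|z\|_A=1}|\langle Tz,z\rangle_A|$, and $d\omega_A(T)=\sup_{\|z\|_A=1}(|\langle Tz,z\rangle_A|^2+\|Tz\|_A^4)^{1/2}$. *)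

From HB Require Import structures.
From mathcomp Require Import all_boot all_order all_algebra.
From mathcomp Require Import complex.
From mathcomp Require Import boolp classical_sets reals.
From Stdlib Require Import ClassicalEpsilon.

Set Implicit Arguments. Unset Strict Implicit. Unset Printing Implicit Defensive.
Import Order.TTheory GRing.Theory Num.Theory.
Local Open Scope ring_scope.
Local Open Scope classical_set_scope.

Section Hilbert.
Variables (R : realType) (V : lmodType R[i]) (ip : V -> V -> R[i]).

Definition is_inner_product : Prop :=
  (forall (a : R[i]) (x y z : V), ip (a *: x + y) z = a * ip x z + ip y z) /\
  (forall x y : V, ip y x = conjc (ip x y)) /\
  (forall x : V, 0 <= ip x x) /\
  (forall x : V, ip x x = 0 -> x = 0).

Definition hnorm (x : V) : R := Num.sqrt (complex.Re (ip x x)).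

Definition hcomplete : Prop :=
  forall u : nat -> V,
    (forall e : R, 0 < e -> exists N : nat, forall m n : nat,
        (N <= m)%N -> (N <= n)%N -> hnorm (u m - u n) < e) ->
    exists l : V, forall e : R, 0 < e -> exists N : nat, forall n : nat,
        (N <= n)%N -> hnorm (u n - l) < e.

Definition is_hilbert : Prop := is_inner_product /\ hcomplete.

Definition bounded_op (T : V -> V) : Prop :=
  (forall (a : R[i]) (x y : V), T (a *: x + y) = a *: T x + T y) /\
  (exists M : R, forall x : V, hnorm (T x) <= M * hnorm x).

Definition adjoint (T : V -> V) : V -> V :=
  epsilon (inhabits (fun x : V => x))
    (fun T' : V -> V => forall x y : V, ip (T x) y = ip x (T' y)).

Definition positive_op (A : V -> V) : Prop :=
  bounded_op A /\ forall x : V, 0 <= ip (A x) x.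

(* Moore-Penrose inverse of A, defined on R(A) + R(A)^perp:
   A^dagger y is the unique x in N(A)^perp with A x - y in R(A)^perp
   (i.e. A x is the R(A)-component of y).  Unspecified outside that domain. *)
Definition mp_inverse (A : V -> V) (y : V) : V :=
  epsilon (inhabits (0 : V))
    (fun x : V => (forall k : V, A k = 0 -> ip x k = 0) /\
                  (forall z : V, ip (A x - y) (A z) = 0)).

Definition in_BA (A S : V -> V) : Prop :=
  bounded_op S /\
  exists Rop : V -> V, bounded_op Rop /\ forall x : V, A (Rop x) = adjoint S (A x).

Definition sharpA (A S : V -> V) : V -> V :=
  fun x => mp_inverse A (adjoint S (A x)).

Definition ipA (A : V -> V) (x z : V) : R[i] := ip (A x) z.
Definition normA (A : V -> V) (z : V) : R := Num.sqrt (complex.Re (ipA A z z)).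

Definition unit_sphereA (A : V -> V) : set V := [set z | normA A z = 1].

Definition opnormA (A T : V -> V) : R :=
  sup [set normA A (T z) | z in unit_sphereA A].
Definition numradA (A T : V -> V) : R :=
  sup [set Normc.normc (ipA A (T z) z) | z in unit_sphereA A].
Definition dnumradA (A T : V -> V) : R :=
  sup [set Num.sqrt (Normc.normc (ipA A (T z) z) ^+ 2 + normA A (T z) ^+ 4)
      | z in unit_sphereA A].

End Hilbert.

From HB Require Import structures.
From mathcomp Require Import all_boot all_order all_algebra.
From mathcomp Require Import complex.
From mathcomp Require Import boolp classical_sets reals.
From mathcomp Require Import ring lra.
From Stdlib Require Import ClassicalEpsilon.
Import Order.TTheory GRing.Theory Num.Theory.
Set Implicit Arguments. Unset Strict Implicit. Unset Printing Implicit Defensive.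
Local Open Scope ring_scope.
Local Open Scope complex_scope.
Local Open Scope classical_set_scope.

(* Write <x, z>_A = <A x, z>.  It is a semi-inner product, so Cauchy-Schwarz and
   Buzano's inequality hold for it, and S^#A is an A-adjoint of S:
   <S^#A u, v>_A = <u, S v>_A.  For an A-unit vector z put s = <S z, z>_A and
   t = ||S z||_A^2.  Then <(S^#A S + S) z, z>_A = t + s, hence
     |s|^2 + t^2 <= |t + s|^2 + 2 t |s|,
   and Buzano's inequality with e = z gives
     2 t |s| <= ||S z||_A ||S^#A S z||_A + |<S^#A S^2 z, z>_A|
             <= (t + ||S^#A S z||_A^2) / 2 + |<S^#A S^2 z, z>_A|,
   where t + ||S^#A S z||_A^2 = Re <((S^#A S)^2 + S^#A S) z, z>_A is at most the
   A-norm of ((S^#A S)^2 + S^#A S) z.  Taking suprema over z gives the claim.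

   The adjoint and the Moore-Penrose inverse are defined by choice, so their
   defining properties come from the Riesz representation theorem, proved via the
   projection theorem.  The suprema are only informative for A-bounded operators;
   that S is A-bounded follows from the power trick applied to the A-symmetric
   operator R S, where A R = S^* A. *)

Local Notation Re := complex.Re.
Local Notation Im := complex.Im.
Local Notation normc := Normc.normc.

Section Linear.
Variables (K : pzRingType) (U W : lmodType K) (f : U -> W).
Hypothesis f_linear : forall a x y, f (a *: x + y) = a *: f x + f y.

Lemma lin0 : f 0 = 0.
Proof.
have := f_linear 1 0 0; rewrite scaler0 addr0 scale1r => /eqP.
by rewrite addrC -subr_eq subrr => /eqP.
Qed.

Lemma linD x y : f (x + y) = f x + f y.
Proof. by have := f_linear 1 x y; rewrite !scale1r. Qed.

Lemma linZ a x : f (a *: x) = a *: f x.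
Proof. by have := f_linear a x 0; rewrite addr0 lin0 addr0. Qed.

Lemma linN x : f (- x) = - f x.
Proof. by rewrite -scaleN1r linZ scaleN1r. Qed.

Lemma linB x y : f (x - y) = f x - f y.
Proof. by rewrite linD linN. Qed.

End Linear.

Section ComplexNorm.
Variable R : realType.
Implicit Types x y : R[i].

Lemma conjc_invol x : conjc (conjc x) = x. Proof. by case: x => a b /=; rewrite opprK. Qed.

Lemma conjcM x y : conjc (x * y) = conjc x * conjc y. Proof. exact: rmorphM. Qed.

Lemma ReJ x : Re (conjc x) = Re x. Proof. by case: x. Qed.

Lemma normc_sqrE x : normc x ^+ 2 = Re x ^+ 2 + Im x ^+ 2.
Proof. by case: x => a b; rewrite /= sqr_sqrtr // addr_ge0 ?sqr_ge0. Qed.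

Lemma normc_ge0 x : 0 <= normc x.
Proof. by case: x => a b; exact: sqrtr_ge0. Qed.

Lemma Re_le_normc x : Re x <= normc x.
Proof.
have [x0|x0] := lerP (Re x) 0; first exact: le_trans x0 (normc_ge0 x).
by rewrite -(@ler_pXn2r _ 2) ?nnegrE ?normc_ge0 ?(ltW x0) // normc_sqrE lerDl sqr_ge0.
Qed.

Lemma normc_real (a : R) : normc a%:C = `|a|.
Proof. by rewrite /= expr0n addr0 sqrtr_sqr. Qed.

Lemma normc_nat n : normc n%:R = n%:R :> R.
Proof. by rewrite -(rmorph_nat (real_complex R)) normc_real ger0_norm. Qed.

Lemma mulcJ x : x * conjc x = (normc x ^+ 2)%:C.
Proof. rewrite normc_sqrE; case: x => a b; simpc; congr (_ +i* _)%C; ring. Qed.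

Lemma normc_sqr_le_addr (t : R) (s : R[i]) : 0 <= t ->
  normc s ^+ 2 + t ^+ 2 <= normc (t%:C + s) ^+ 2 + 2 * t * normc s.
Proof.
move=> t_ge0; rewrite !normc_sqrE !raddfD /= add0r.
have := Re_le_normc (- s); rewrite normcN raddfN /=.
have := normc_ge0 s; nra.
Qed.
End ComplexNorm.

Section RealLemmas.
Variable R : realType.

Lemma discriminant_le (a b c : R) :
  0 <= a -> (forall s, 0 <= a * s ^+ 2 - 2 * b * s + c) -> b ^+ 2 <= a * c.
Proof.
move=> a_ge0 pos; have [a0|a_neq0] := eqVneq a 0.
  have [->|b_neq0] := eqVneq b 0; first by rewrite a0 expr0n mul0r.
  have := pos ((c + 1) / (2 * b)); rewrite a0 mul0r sub0r mulrC divfK.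
    by lra.
  by rewrite mulf_neq0 // pnatr_eq0.
set t := b / a; have bE : b = a * t by rewrite /t mulrC divfK.
have := pos t; rewrite bE; nra.
Qed.

Lemma bernoulli (x : R) n : 0 <= x -> 1 + n%:R * x <= (1 + x) ^+ n.
Proof.
move=> x_ge0; elim: n => [|n IHn]; first by rewrite mul0r addr0 expr0.
rewrite exprS -natr1.
have x1_ge0 : 0 <= 1 + x by lra.
have := ler_wpM2l x1_ge0 IHn; have : 0 <= n%:R * x by rewrite mulr_ge0.
nra.
Qed.

Lemma exprn2_unbounded (r c : R) : 1 < r -> exists n, c < r ^+ (2 ^ n).
Proof.
move=> r_gt1; set n := Num.bound `|c / (r - 1)|.
have lt_n : c / (r - 1) < n%:R.
  by apply: le_lt_trans (real_ler_norm _) (archi_boundP _); rewrite ?num_real.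
have le_n : n%:R <= (2 ^ n)%:R :> R by rewrite ler_nat ltnW // ltn_expl.
have r1_ge0 : 0 <= r - 1 by lra.
exists n; have := bernoulli (2 ^ n) r1_ge0; rewrite addrCA subrr addr0.
move: lt_n; rewrite ltr_pdivrMr ?subr_gt0 //; nra.
Qed.

Lemma squaring_bound (e : nat -> R) (q K C : R) : 0 < K -> 0 <= q ->
  (forall n, e n ^+ 2 <= e n.+1 * q) -> (forall n, e n <= C * K ^+ (2 ^ n)) ->
  e 0%N <= K * q.
Proof.
move=> K_gt0 q_ge0 e_sqr e_bnd; rewrite leNgt; apply/negP => lt_e0.
have e0_gt0 : 0 < e 0%N by apply: le_lt_trans lt_e0; rewrite mulr_ge0 // ltW.
have [q0|q_neq0] := eqVneq q 0.
  by have := e_sqr 0%N; rewrite q0 mulr0 leNgt exprn_gt0.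
have q_gt0 : 0 < q by rewrite lt_def q_neq0.
set r := e 0%N / q; have r_gt0 : 0 < r by rewrite divr_gt0.
have e_ge n : q * r ^+ (2 ^ n) <= e n.
  elim: n => [|n IHn]; first by rewrite expn0 expr1 mulrC divfK.
  rewrite -(ler_pM2r q_gt0); apply: le_trans (e_sqr n).
  have qr_ge0 : 0 <= q * r ^+ (2 ^ n) by rewrite mulr_ge0 ?exprn_ge0 ?ltW.
  apply: le_trans (_ : (q * r ^+ (2 ^ n)) ^+ 2 <= _); last first.
    by rewrite ler_pXn2r ?nnegrE // (le_trans qr_ge0 IHn).
  by rewrite expnSr exprM [X in X <= _](_ : _ = (q * r ^+ (2 ^ n)) ^+ 2) //; ring.
have rK_gt1 : 1 < r / K by rewrite ltr_pdivlMr // mul1r ltr_pdivlMr // mulrC.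
have [n lt_n] := exprn2_unbounded (C / q) rK_gt1.
move: (le_trans (e_ge n) (e_bnd n)); apply/negP; rewrite -ltNge.
rewrite -(ltr_pM2r (exprn_gt0 (2 ^ n) K_gt0)) in lt_n.
rewrite expr_div_n divfK ?expf_neq0 ?gt_eqF // mulrAC ltr_pdivrMr // in lt_n.
by rewrite [q * _]mulrC.
Qed.

Lemma sqrtrD_le (a b : R) : 0 <= a -> 0 <= b ->
  Num.sqrt (a + b) <= Num.sqrt a + Num.sqrt b.
Proof.
move=> a_ge0 b_ge0; have ab_ge0 : 0 <= a + b by rewrite addr_ge0.
rewrite -(@ler_pXn2r _ 2) ?nnegrE ?addr_ge0 ?sqrtr_ge0 // sqrrD !sqr_sqrtr //.
by have := mulr_ge0 (sqrtr_ge0 a) (sqrtr_ge0 b); rewrite mulr2n; lra.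
Qed.

Lemma invn_small (e : R) : 0 < e ->
  exists N, forall n, (N <= n)%N -> (n.+1%:R)^-1 < e.
Proof.
move=> e_gt0; exists (Num.bound e^-1) => n le_n.
rewrite -[e]invrK ltf_pV2 ?posrE ?invr_gt0 ?ltr0Sn //.
apply: lt_le_trans (archi_boundP _) _; first by rewrite invr_ge0 ltW.
by rewrite ler_nat ltnW.
Qed.

Lemma sup_ge0 (E : set R) : (forall x, E x -> 0 <= x) -> 0 <= sup E.
Proof.
move=> E_ge0; have [[[x Ex] ubE]|/sup_out ->] := pselect (has_sup E); last by [].
exact: le_trans (E_ge0 x Ex) (sup_upper_bound (conj (ex_intro _ x Ex) ubE) Ex).
Qed.

Lemma sup_le_nonneg_ub (E : set R) b : 0 <= b -> ubound E b -> sup E <= b.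
Proof.
move=> b_ge0 ubE; have [E0|/set0P/negP/negPn/eqP ->] := pselect (E !=set0).
  exact: ge_sup.
by rewrite sup0.
Qed.

End RealLemmas.

Record semi_inner_product (R : realType) (V : lmodType R[i]) (ip : V -> V -> R[i])
  : Prop := SemiInnerProduct {
  sip_linear : forall (a : R[i]) (x y z : V), ip (a *: x + y) z = a * ip x z + ip y z;
  sip_conj : forall x y : V, ip y x = conjc (ip x y);
  sip_ge0 : forall x : V, 0 <= ip x x }.

Section SemiInnerProduct.
Variables (R : realType) (V : lmodType R[i]) (ip : V -> V -> R[i]).
Hypothesis ip_semi : semi_inner_product ip.
Implicit Types (x y z u v : V) (a : R[i]).

Let ip_linear z : forall a x y, (ip^~ z : V -> R[i]^o) (a *: x + y) = a *: ip x z + ip y z.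
Proof. by move=> a x y; exact: sip_linear. Qed.

Lemma ip0l z : ip 0 z = 0. Proof. exact: lin0 (ip_linear z). Qed.
Lemma ipDl x y z : ip (x + y) z = ip x z + ip y z. Proof. exact: (linD (ip_linear z) x y). Qed.
Lemma ipZl a x z : ip (a *: x) z = a * ip x z. Proof. exact: (linZ (ip_linear z) a x). Qed.
Lemma ipBl x y z : ip (x - y) z = ip x z - ip y z. Proof. exact: (linB (ip_linear z) x y). Qed.

Lemma ip0r z : ip z 0 = 0. Proof. by rewrite sip_conj // ip0l conjc0. Qed.
Lemma ipDr x y z : ip z (x + y) = ip z x + ip z y.
Proof. by rewrite !(sip_conj ip_semi _ z) ipDl rmorphD. Qed.
Lemma ipZr a x z : ip z (a *: x) = conjc a * ip z x.
Proof. by rewrite !(sip_conj ip_semi _ z) ipZl rmorphM. Qed.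
Lemma ipNr x z : ip z (- x) = - ip z x.
Proof. by rewrite -scaleN1r ipZr rmorphN1 mulN1r. Qed.
Lemma ipBr x y z : ip z (x - y) = ip z x - ip z y.
Proof. by rewrite ipDr ipNr. Qed.

Lemma conjc_ip_self x : conjc (ip x x) = ip x x.
Proof. by rewrite -sip_conj. Qed.

Definition sqnorm x := Re (ip x x).
Definition seminorm x := Num.sqrt (sqnorm x).

Lemma ip_selfE x : ip x x = (sqnorm x)%:C.
Proof. by rewrite /sqnorm; have := ger0_Im (sip_ge0 ip_semi x); case: (ip x x) => a b /= ->. Qed.

Lemma sqnorm_ge0 x : 0 <= sqnorm x.
Proof. by rewrite -lecR -ip_selfE sip_ge0. Qed.

Lemma seminorm_ge0 x : 0 <= seminorm x. Proof. exact: sqrtr_ge0. Qed.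

Lemma sqr_seminorm x : seminorm x ^+ 2 = sqnorm x.
Proof. by rewrite sqr_sqrtr // sqnorm_ge0. Qed.

Lemma sqnormD x y : sqnorm (x + y) = sqnorm x + sqnorm y + 2 * Re (ip x y).
Proof. by rewrite /sqnorm ipDl !ipDr (sip_conj ip_semi x y) !raddfD /= ReJ; lra. Qed.

Lemma sqnormZ a x : sqnorm (a *: x) = normc a ^+ 2 * sqnorm x.
Proof. by rewrite /sqnorm ipZl ipZr mulrA mulcJ ip_selfE -rmorphM. Qed.

Lemma sqnormN x : sqnorm (- x) = sqnorm x.
Proof. by rewrite -scaleN1r sqnormZ normcN normc_real normr1 expr1n mul1r. Qed.

Lemma parallelogram x y :
  sqnorm (x + y) + sqnorm (x - y) = 2 * sqnorm x + 2 * sqnorm y.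
Proof. by rewrite !sqnormD sqnormN ipNr raddfN /=; lra. Qed.

Lemma sqnorm_subZ u k (s : R) :
  sqnorm (u - (s%:C * ip u k) *: k)
  = sqnorm u - 2 * s * normc (ip u k) ^+ 2 + s ^+ 2 * normc (ip u k) ^+ 2 * sqnorm k.
Proof.
rewrite {1}/sqnorm ipBl !ipBr !ipZl !ipZr (sip_conj ip_semi u k) !ip_selfE normc_sqrE.
by case: (ip u k) => a b; simpc => /=; ring.
Qed.

Lemma cauchy_schwarz_sqr x y : normc (ip x y) ^+ 2 <= sqnorm x * sqnorm y.
Proof.
set n := normc (ip x y) ^+ 2.
have [n0|n_neq0] := eqVneq n 0; first by rewrite n0 mulr_ge0 ?sqnorm_ge0.
have n_gt0 : 0 < n by rewrite lt_def n_neq0 sqr_ge0.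
rewrite -(ler_pM2l n_gt0) -expr2 (_ : n * _ = n * sqnorm y * sqnorm x); last by ring.
apply: discriminant_le => [|s]; first by rewrite mulr_ge0 ?sqnorm_ge0 ?ltW.
by have := sqnorm_ge0 (x - (s%:C * ip x y) *: y); rewrite (sqnorm_subZ x y s) -/n; lra.
Qed.

Lemma cauchy_schwarz x y : normc (ip x y) <= seminorm x * seminorm y.
Proof.
rewrite -(@ler_pXn2r _ 2) ?nnegrE ?normc_ge0 ?mulr_ge0 ?seminorm_ge0 //.
by rewrite exprMn !sqr_seminorm cauchy_schwarz_sqr.
Qed.

Lemma ler_seminormD x y : seminorm (x + y) <= seminorm x + seminorm y.
Proof.
rewrite -(@ler_pXn2r _ 2) ?nnegrE ?addr_ge0 ?seminorm_ge0 //.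
rewrite sqrrD !sqr_seminorm sqnormD mulr2n.
by have := le_trans (Re_le_normc _) (cauchy_schwarz x y); lra.
Qed.

Lemma seminormB x y : seminorm (x - y) = seminorm (y - x).
Proof. by rewrite /seminorm -sqnormN opprB. Qed.

Lemma ip_eq0_of_min u k : (forall a, sqnorm u <= sqnorm (u - a *: k)) -> ip u k = 0.
Proof.
move=> u_min; apply: Normc.eq0_normc; apply/eqP; rewrite -sqrf_eq0.
set n := normc (ip u k) ^+ 2; have n_ge0 : 0 <= n by rewrite sqr_ge0.
rewrite -sqrf_eq0 eq_le sqr_ge0 andbT -(mulr0 (n * sqnorm k)); apply: discriminant_le.
  by rewrite mulr_ge0 ?sqnorm_ge0.
by move=> s; have := u_min (s%:C * ip u k); rewrite (sqnorm_subZ u k s) -/n addr0; lra.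
Qed.

Lemma sqnorm_sub_le_midpoint x u v (d a b : R) :
  d <= sqnorm (x - 2^-1 *: (u + v)) ->
  sqnorm (x - u) <= d + a -> sqnorm (x - v) <= d + b ->
  sqnorm (u - v) <= 2 * a + 2 * b.
Proof.
have -> : u - v = (x - v) - (x - u) by rewrite opprB [RHS]addrC addrA subrK.
have mid : (x - v) + (x - u) = 2 *: (x - 2^-1 *: (u + v)).
  rewrite scalerBr scalerA mulfV ?pnatr_eq0 // scale1r addrACA -opprD.
  by rewrite scaler_nat mulr2n [v + u]addrC.
by have := parallelogram (x - v) (x - u); rewrite mid sqnormZ normc_nat; lra.
Qed.

Lemma buzano x y e : sqnorm e = 1 ->
  2 * normc (ip x e) * normc (ip e y) <= seminorm x * seminorm y + normc (ip x y).
Proof.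
move=> e1; set c := ip x e.
have sq_x : sqnorm (x - (2 * c) *: e) = sqnorm x.
  rewrite /sqnorm ipBl !ipBr !ipZl !ipZr !ip_selfE e1 -/c (sip_conj ip_semi x e) -/c.
  by rewrite rmorphM rmorph_nat; congr Re; ring.
have := cauchy_schwarz (x - (2 * c) *: e) y.
rewrite {1}/seminorm sq_x -/(seminorm x) ipBl ipZl => cs.
have -> : 2 * normc c * normc (ip e y) = normc (ip x y - (ip x y - 2 * c * ip e y)).
  by rewrite opprB addrC subrK !Normc.normcM normc_nat.
by apply: le_trans (le_normcD _ _) _; rewrite normcN addrC lerD2r.
Qed.

Lemma ip_iter_sym (T : V -> V) n u v : (forall u v, ip (T u) v = ip u (T v)) ->
  ip (iter n T u) v = ip u (iter n T v).
Proof. by move=> T_sym; elim: n u v => [//|n IHn] u v; rewrite iterS T_sym IHn -iterSr. Qed.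

(* Power trick: e_n := Re <T^(2^n) x, x> satisfies e_n^2 <= e_(n+1) ||x||^2. *)
Lemma Re_ip_sym_le (T : V -> V) x (C K : R) : 0 < K ->
  (forall u v, ip (T u) v = ip u (T v)) ->
  (forall n, Re (ip (iter n T x) x) <= C * K ^+ n) ->
  Re (ip (T x) x) <= K * sqnorm x.
Proof.
move=> K_gt0 T_sym T_bnd; pose e n := Re (ip (iter (2 ^ n) T x) x).
apply: (@squaring_bound _ e _ _ C K_gt0 (sqnorm_ge0 x)) => [n|n]; last exact: T_bnd.
have <- : sqnorm (iter (2 ^ n) T x) = e n.+1.
  by rewrite /sqnorm -ip_iter_sym // -iterD addnn -mul2n -expnS.
apply: le_trans (cauchy_schwarz_sqr _ _).
by rewrite normc_sqrE lerDl sqr_ge0.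
Qed.

Definition seminorm_bounded (X : V -> V) :=
  exists2 c, 0 <= c & forall x, seminorm (X x) <= c * seminorm x.

Lemma seminorm_iter_le (T : V -> V) (c : R) n x : 0 <= c ->
  (forall x, seminorm (T x) <= c * seminorm x) ->
  seminorm (iter n T x) <= c ^+ n * seminorm x.
Proof.
move=> c_ge0 T_bnd; elim: n => [|n IHn]; first by rewrite mul1r.
by rewrite iterS exprS -mulrA (le_trans (T_bnd _)) // ler_wpM2l.
Qed.

Lemma seminorm_boundedD (X Y : V -> V) : seminorm_bounded X -> seminorm_bounded Y ->
  seminorm_bounded (fun x => X x + Y x).
Proof.
move=> [c c_ge0 X_bnd] [d d_ge0 Y_bnd]; exists (c + d) => [|x]; first exact: addr_ge0.
by rewrite mulrDl (le_trans (ler_seminormD _ _)) // lerD.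
Qed.

Lemma seminorm_bounded_comp (X Y : V -> V) : seminorm_bounded X -> seminorm_bounded Y ->
  seminorm_bounded (fun x => X (Y x)).
Proof.
move=> [c c_ge0 X_bnd] [d d_ge0 Y_bnd]; exists (c * d) => [|x]; first exact: mulr_ge0.
by rewrite -mulrA (le_trans (X_bnd _)) // ler_wpM2l.
Qed.

End SemiInnerProduct.

Lemma inner_product_semi (R : realType) (V : lmodType R[i]) (ip : V -> V -> R[i]) :
  is_inner_product ip -> semi_inner_product ip.
Proof. by case=> ipL [ipC [ip_ge0 _]]; split. Qed.

Lemma bounded_op_seminorm (R : realType) (V : lmodType R[i]) (ip : V -> V -> R[i]) (T : V -> V) :
  bounded_op ip T -> seminorm_bounded ip T.
Proof.
case=> _ [c T_bnd]; exists `|c| => // x; apply: le_trans (T_bnd x) _.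
by rewrite ler_wpM2r ?seminorm_ge0 ?ler_norm.
Qed.

Definition subspace (R : realType) (V : lmodType R[i]) (M : set V) :=
  M 0 /\ forall a x y, M x -> M y -> M (a *: x + y).

Section HilbertSpace.
Variables (R : realType) (V : lmodType R[i]) (ip : V -> V -> R[i]).
Hypothesis ip_hilbert : is_hilbert ip.

Let ip_semi := inner_product_semi ip_hilbert.1.
Local Notation sqnorm := (sqnorm ip).
Local Notation seminorm := (seminorm ip).

Let ip_def : forall x, ip x x = 0 -> x = 0 := ip_hilbert.1.2.2.2.

Lemma seminorm_eq0 x : seminorm x = 0 -> x = 0.
Proof.
move/eqP; rewrite sqrtr_eq0 => le_x0; apply: ip_def.
suff x0 : sqnorm x = 0 by rewrite ip_selfE // x0.
by apply/eqP; rewrite eq_le le_x0 sqnorm_ge0.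
Qed.

Definition hcvg (u : nat -> V) (l : V) :=
  forall e, 0 < e -> exists N, forall n, (N <= n)%N -> seminorm (u n - l) < e.

Definition hcauchy (u : nat -> V) := forall e, 0 < e ->
  exists N, forall m n, (N <= m)%N -> (N <= n)%N -> seminorm (u m - u n) < e.

Definition closed_set (M : set V) := forall u l, (forall n, M (u n)) -> hcvg u l -> M l.

Lemma closed_kernel (W : lmodType R[i]) (f : V -> W) (nu : W -> R) (c : R) :
  (forall a x y, f (a *: x + y) = a *: f x + f y) ->
  (forall w, 0 <= nu w) -> (forall w, nu w = 0 -> w = 0) ->
  0 <= c -> (forall x, nu (f x) <= c * seminorm x) -> closed_set [set x | f x = 0].
Proof.
move=> f_lin nu_ge0 nu_def c_ge0 f_bnd u l u0 u_cvg; apply: nu_def.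
apply/eqP; rewrite eq_le nu_ge0 andbT; apply/ler_addgt0Pr => e e_gt0.
have c1_gt0 : 0 < c + 1 by lra.
have [N uN] := u_cvg _ (divr_gt0 e_gt0 c1_gt0).
have -> : f l = f (l - u N) by rewrite linB // u0 subr0.
apply: le_trans (f_bnd _) _; rewrite add0r seminormB //.
apply: le_trans (ler_wpM2l c_ge0 (ltW (uN N (leqnn N)))) _.
by rewrite mulrA ler_pdivrMr // mulrDr mulr1 mulrC lerDl ltW.
Qed.

Lemma sqnorm_le_of_cvg u l x (d : R) : 0 <= d -> hcvg u l ->
  (forall n, sqnorm (x - u n) <= d + n.+1%:R^-1) -> sqnorm (x - l) <= d.
Proof.
move=> d_ge0 u_cvg u_near; rewrite -sqr_seminorm // -(sqr_sqrtr d_ge0).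
rewrite ler_pXn2r ?nnegrE ?seminorm_ge0 ?sqrtr_ge0 //; apply/ler_addgt0Pr => e e_gt0.
have e2_gt0 : 0 < e / 2 by rewrite divr_gt0.
have [N1 uN1] := u_cvg _ e2_gt0.
have [N2 invN2] := invn_small (exprn_gt0 2 e2_gt0).
set n := maxn N1 N2.
have near_x : seminorm (x - u n) <= Num.sqrt d + e / 2.
  apply: le_trans (ler_wsqrtr (u_near n)) _.
  have inv_ge0 : 0 <= n.+1%:R^-1 :> R by rewrite invr_ge0 ler0n.
  apply: le_trans (sqrtrD_le d_ge0 inv_ge0) _.
  rewrite lerD2l -(ger0_norm (ltW e2_gt0)) -sqrtr_sqr ler_wsqrtr // ltW //.
  exact: invN2 (leq_maxr _ _).
have := uN1 n (leq_maxl _ _); have := ler_seminormD ip_semi (x - u n) (u n - l).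
by rewrite addrA subrK; lra.
Qed.

Section Projection.
Variables (M : set V) (x : V).
Hypotheses (M_sub : subspace M) (M_closed : closed_set M).

Let D := [set sqnorm (x - m) | m in M].
Let dist2 := inf D.

Let D_inf : has_inf D.
Proof.
split; first by exists (sqnorm (x - 0)), 0 => //; exact: M_sub.1.
by exists 0 => _ [m _ <-]; exact: sqnorm_ge0.
Qed.

Let dist2_le m : M m -> dist2 <= sqnorm (x - m).
Proof. by move=> Mm; apply: ge_inf D_inf.2 _ _; exists m. Qed.

Let dist2_ge0 : 0 <= dist2.
Proof. by apply: lb_le_inf D_inf.1 _ => _ [m _ <-]; exact: sqnorm_ge0. Qed.

Let M_midpoint u v : M u -> M v -> M (2^-1 *: (u + v)).
Proof.
move=> Mu Mv; have [M0 M_lin] := M_sub.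
by rewrite -[_ *: _]addr0 -[u]scale1r; apply: (M_lin) => //; apply: (M_lin).
Qed.

Let minimizing_cauchy (u : nat -> V) : (forall n, M (u n)) ->
  (forall n, sqnorm (x - u n) <= dist2 + n.+1%:R^-1) -> hcauchy u.
Proof.
move=> Mu u_near e e_gt0.
have e4_gt0 : 0 < e ^+ 2 / 4 by rewrite divr_gt0 ?exprn_gt0.
have [N invN] := invn_small e4_gt0; exists N => m n le_m le_n.
rewrite -(@ltr_pXn2r _ 2) ?nnegrE ?seminorm_ge0 ?ltW // sqr_seminorm //.
apply: le_lt_trans (sqnorm_sub_le_midpoint ip_semi _ (u_near m) (u_near n)) _.
  exact: dist2_le (M_midpoint (Mu m) (Mu n)).
have := invN m le_m; have := invN n le_n.
by move: (m.+1%:R^-1) (n.+1%:R^-1) (e ^+ 2) => a b c; lra.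
Qed.

Lemma orthogonal_projection : exists2 m, M m & forall k, M k -> ip (x - m) k = 0.
Proof.
have [M0 M_lin] := M_sub.
have [u u_spec] : exists u : nat -> V,
    forall n, M (u n) /\ sqnorm (x - u n) <= dist2 + n.+1%:R^-1.
  apply: (@choice _ _ (fun n m => M m /\ sqnorm (x - m) <= dist2 + n.+1%:R^-1)) => n.
  have inv_gt0 : 0 < n.+1%:R^-1 :> R by rewrite invr_gt0 ltr0Sn.
  have [_ [m Mm <-] lt_m] := inf_adherent inv_gt0 D_inf.
  by exists m; split => //; apply: ltW.
have [l u_cvg] := ip_hilbert.2 u (minimizing_cauchy (fun n => (u_spec n).1)
  (fun n => (u_spec n).2)).
have Ml : M l := M_closed (fun n => (u_spec n).1) u_cvg.
have l_min := sqnorm_le_of_cvg dist2_ge0 u_cvg (fun n => (u_spec n).2).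
exists l => // k Mk; apply: (ip_eq0_of_min ip_semi) => a.
rewrite -addrA -opprD; apply: le_trans l_min (dist2_le _).
by rewrite addrC; apply: (M_lin).
Qed.

End Projection.

Lemma riesz_representation (f : V -> R[i]) (c : R) :
  (forall a x y, f (a *: x + y) = a * f x + f y) ->
  0 <= c -> (forall x, normc (f x) <= c * seminorm x) ->
  exists w, forall v, f v = ip v w.
Proof.
move=> f_lin c_ge0 f_bnd.
have f_lin' : forall a x y, (f : V -> R[i]^o) (a *: x + y) = a *: f x + f y by [].
have ker_sub : subspace [set v | f v = 0].
  split=> [|a x y /= fx fy]; first exact: lin0 f_lin'.
  by rewrite f_lin fx fy mulr0 addr0.
have ker_closed := closed_kernel f_lin' (@normc_ge0 R) (@Normc.eq0_normc R) c_ge0 f_bnd.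
case: (pselect (forall v, f v = 0)) => [f0 | /existsNP [x0 fx0]].
  by exists 0 => v; rewrite f0 ip0r.
have [m km p_orth] := orthogonal_projection x0 ker_sub ker_closed.
set p := x0 - m in p_orth.
have fp : f p = f x0 by rewrite (linB f_lin') km subr0.
have fp_neq0 : f p != 0 by rewrite fp; apply/eqP.
have pp_neq0 : ip p p != 0.
  by apply: contra fp_neq0 => /eqP/ip_def ->; rewrite (lin0 f_lin').
exists (conjc (f p / ip p p) *: p) => v.
have fZ a x : f (a *: x) = a * f x := linZ f_lin' a x.
have := p_orth (v - (f v / f p) *: p); rewrite /= (linB f_lin') fZ divfK // subrr.
move=> /(_ erefl); rewrite ipBr // ipZr // => /eqP; rewrite subr_eq0 => /eqP pv.
rewrite ipZr // conjc_invol (sip_conj ip_semi p v) pv conjcM conjc_invol conjc_ip_self //.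
by field; rewrite fp_neq0 pp_neq0.
Qed.

Lemma adjointP (T : V -> V) : bounded_op ip T ->
  forall x y, ip (T x) y = ip x (adjoint ip T y).
Proof.
move=> T_bdd; have [c c_ge0 T_bnd] := bounded_op_seminorm T_bdd.
pose adjoint_of T' := forall x y, ip (T x) y = ip x (T' y).
suff [T' T'P] : exists T' : V -> V, forall y x, ip (T x) y = ip x (T' y).
  by apply: (epsilon_spec _ adjoint_of); exists T' => x y; apply: T'P.
apply: (@choice _ _ (fun y w => forall x, ip (T x) y = ip x w)) => y.
apply: (@riesz_representation (fun x => ip (T x) y) (c * seminorm y)).
- by move=> a x z; rewrite T_bdd.1 ipDl // ipZl.
- by rewrite mulr_ge0 ?seminorm_ge0.
- move=> x; apply: le_trans (cauchy_schwarz ip_semi _ _) _.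
  by rewrite mulrAC ler_wpM2r ?seminorm_ge0.
Qed.

Lemma mp_inverse_range (A : V -> V) w : bounded_op ip A ->
  A (mp_inverse ip A (A w)) = A w.
Proof.
move=> A_bdd; have A_lin := A_bdd.1; have [c c_ge0 A_bnd] := bounded_op_seminorm A_bdd.
have ker_sub : subspace [set k | A k = 0].
  split=> [|a x y /= Ax Ay]; first exact: lin0 A_lin.
  by rewrite A_lin Ax Ay scaler0 addr0.
have ker_closed := closed_kernel A_lin (@seminorm_ge0 _ _ ip) seminorm_eq0 c_ge0 A_bnd.
have [m Am w_orth] := orthogonal_projection w ker_sub ker_closed.
(* [w - m] lies in (ker A)^perp and is mapped to [A w]: it witnesses the choice. *)
pose mp_of x := (forall k, A k = 0 -> ip x k = 0) /\ (forall z, ip (A x - A w) (A z) = 0).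
set x := mp_inverse ip A (A w).
have [_ x_orth] : mp_of x.
  apply: (epsilon_spec _ mp_of); exists (w - m); split=> [k /w_orth //|z].
  by rewrite (linB A_lin) Am subr0 subrr ip0l.
have := x_orth (x - w); rewrite (linB A_lin) => /ip_def /eqP.
by rewrite subr_eq0 => /eqP.
Qed.

End HilbertSpace.

Section PositiveOperator.
Variables (R : realType) (V : lmodType R[i]) (ip : V -> V -> R[i]) (A : V -> V).
Hypotheses (ip_inner : is_inner_product ip) (A_pos : positive_op ip A).

Let ip_semi := inner_product_semi ip_inner.
Let A_lin := A_pos.1.1.

Lemma positive_op_conj x y : ip (A y) x = conjc (ip (A x) y).
Proof.
have Im0 w : Im (ip (A w) w) = 0 by exact: ger0_Im (A_pos.2 w).
have Im_sum : Im (ip (A x) y) + Im (ip (A y) x) = 0.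
  have := Im0 (x + y); rewrite (linD A_lin) (ipDl ip_semi) !(ipDr ip_semi).
  by rewrite !raddfD /= !Im0 add0r addr0.
have Re_diff : Re (ip (A y) x) - Re (ip (A x) y) = 0.
  have := Im0 (x + 'i *: y).
  rewrite (linD A_lin) (linZ A_lin) (ipDl ip_semi) (ipZl ip_semi).
  rewrite !(ipDr ip_semi) !(ipZr ip_semi).
  move: (Im0 x) (Im0 y); case: (ip (A x) x) => c1 c2; case: (ip (A y) y) => d1 d2.
  case: (ip (A x) y) => a1 a2; case: (ip (A y) x) => b1 b2.
  by simpc => /=; lra.
move: Im_sum Re_diff; case: (ip (A x) y) => a1 a2; case: (ip (A y) x) => b1 b2 /= h1 h2.
by congr (_ +i* _); lra.
Qed.

Lemma ipA_semi : semi_inner_product (ipA ip A).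
Proof.
split=> [a x y z|x y|x]; last exact: A_pos.2.
  by rewrite /ipA A_lin (ipDl ip_semi) (ipZl ip_semi).
exact: positive_op_conj.
Qed.

End PositiveOperator.

Section NumericalRadii.
Variables (R : realType) (V : lmodType R[i]) (ip : V -> V -> R[i]) (A : V -> V).
Hypothesis ipA_semi : semi_inner_product (ipA ip A).
Local Notation normA := (normA ip A).

Lemma numradA_ge (X : V -> V) z : seminorm_bounded (ipA ip A) X -> normA z = 1 ->
  normc (ipA ip A (X z) z) <= numradA ip A X.
Proof.
move=> [c _ X_bnd] z1; apply: ub_le_sup; last by exists z.
exists c => _ [y y1 <-]; apply: le_trans (cauchy_schwarz ipA_semi _ _) _.
by have := X_bnd y; rewrite /unit_sphereA /= in y1; rewrite -[seminorm _ y]/(normA y) y1 !mulr1.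
Qed.

Lemma opnormA_ge (X : V -> V) z : seminorm_bounded (ipA ip A) X -> normA z = 1 ->
  normA (X z) <= opnormA ip A X.
Proof.
move=> [c _ X_bnd] z1; apply: ub_le_sup; last by exists z.
exists c => _ [y y1 <-]; have := X_bnd y.
by rewrite /unit_sphereA /= in y1; rewrite -[seminorm _ y]/(normA y) y1 mulr1.
Qed.

Lemma numradA_ge0 (X : V -> V) : 0 <= numradA ip A X.
Proof. by apply: sup_ge0 => _ [z _ <-]; exact: normc_ge0. Qed.

Lemma opnormA_ge0 (X : V -> V) : 0 <= opnormA ip A X.
Proof. by apply: sup_ge0 => _ [z _ <-]; exact: seminorm_ge0. Qed.

Lemma dnumradA_sqr_le (X : V -> V) (b : R) : 0 <= b ->
  (forall z, normA z = 1 -> normc (ipA ip A (X z) z) ^+ 2 + normA (X z) ^+ 4 <= b) ->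
  dnumradA ip A X ^+ 2 <= b.
Proof.
move=> b_ge0 X_le; rewrite -(sqr_sqrtr b_ge0) ler_pXn2r ?nnegrE ?sqrtr_ge0 //.
  by apply: sup_le_nonneg_ub => [|_ [z z1 <-]]; rewrite ?sqrtr_ge0 ?ler_wsqrtr ?X_le.
by apply: sup_ge0 => _ [z _ <-]; exact: sqrtr_ge0.
Qed.

End NumericalRadii.

Section BAOperator.
Variables (R : realType) (V : lmodType R[i]) (ip : V -> V -> R[i]) (A S : V -> V).
Hypotheses (ip_hilbert : is_hilbert ip) (A_pos : positive_op ip A) (S_BA : in_BA ip A S).

Let ip_semi := inner_product_semi ip_hilbert.1.
Let ipA_semi := ipA_semi ip_hilbert.1 A_pos.
Local Notation ipA := (ipA ip A).
Local Notation normA := (seminorm ipA).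
Local Notation sharp := (sharpA ip A S).

Lemma A_sharpA x : A (sharp x) = adjoint ip S (A x).
Proof.
have [_ [Rop [_ ARop]]] := S_BA.
by rewrite /sharpA -ARop (mp_inverse_range ip_hilbert _ A_pos.1).
Qed.

Lemma ipA_sharpA u v : ipA (sharp u) v = ipA u (S v).
Proof.
rewrite /ipA A_sharpA (sip_conj ip_semi v) -(adjointP ip_hilbert S_BA.1).
by rewrite -(sip_conj ip_semi).
Qed.

Lemma ipA_S_bounded : seminorm_bounded ipA S.
Proof.
have [S_bdd [Rop [Rop_bdd ARop]]] := S_BA.
pose T x := Rop (S x).
have ipA_T u v : ipA (T u) v = ipA (S u) (S v).
  rewrite /ipA /T ARop (sip_conj ip_semi v) -(adjointP ip_hilbert S_bdd).
  by rewrite -(sip_conj ip_semi).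
have T_sym u v : ipA (T u) v = ipA u (T v).
  by rewrite ipA_T (sip_conj ipA_semi (T v) u) ipA_T -(sip_conj ipA_semi).
have [cT cT_ge0 T_bnd] : seminorm_bounded ip T.
  by apply: seminorm_bounded_comp; apply: bounded_op_seminorm.
have [cA cA_ge0 A_bnd] := bounded_op_seminorm A_pos.1.
exists (Num.sqrt (cT + 1)) => [|x]; first exact: sqrtr_ge0.
have cT1_gt0 : 0 < cT + 1 by lra.
rewrite /seminorm -sqrtrM ?(ltW cT1_gt0) //; apply: ler_wsqrtr.
have <- : Re (ipA (T x) x) = sqnorm ipA (S x) by rewrite ipA_T.
apply: (Re_ip_sym_le ipA_semi (C := cA * seminorm ip x ^+ 2)) => // n.
apply: le_trans (Re_le_normc _) _; apply: le_trans (cauchy_schwarz ip_semi _ _) _.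
have iter_bnd := seminorm_iter_le n x cT_ge0 T_bnd.
have le_pow : cT ^+ n <= (cT + 1) ^+ n by apply: lerXn2r; rewrite ?nnegrE ?addr_ge0 ?lerDl.
have A_iter := le_trans (A_bnd _) (ler_wpM2l cA_ge0 iter_bnd).
apply: le_trans (ler_wpM2r (seminorm_ge0 ip x) A_iter) _.
rewrite [X in X <= _](_ : _ = cA * seminorm ip x ^+ 2 * cT ^+ n); last by ring.
by apply: ler_wpM2l => //; rewrite mulr_ge0 ?sqr_ge0.
Qed.

Lemma ipA_sharpA_bounded : seminorm_bounded ipA sharp.
Proof.
have [c c_ge0 S_bnd] := ipA_S_bounded.
exists c => // x; set y := sharp x.
have y2 : normA y ^+ 2 <= normA x * (c * normA y).
  rewrite (sqr_seminorm ipA_semi) /sqnorm ipA_sharpA; apply: le_trans (Re_le_normc _) _.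
  by apply: le_trans (cauchy_schwarz ipA_semi _ _) _; rewrite ler_wpM2l ?seminorm_ge0.
have [y0|y_neq0] := eqVneq (normA y) 0; first by rewrite y0 mulr_ge0 ?seminorm_ge0.
have y_gt0 : 0 < normA y by rewrite lt_def y_neq0 seminorm_ge0.
by rewrite -(ler_pM2r y_gt0) -expr2 (le_trans y2) // mulrCA mulrA.
Qed.

Lemma dnumradA_summand_le z : normA z = 1 ->
  normc (ipA (S z) z) ^+ 2 + normA (S z) ^+ 4 <=
  normc (ipA (sharp (S z) + S z) z) ^+ 2 + normc (ipA (sharp (S (S z))) z)
  + 2^-1 * normA (sharp (S (sharp (S z))) + sharp (S z)).
Proof.
move=> z1; have sqz : sqnorm ipA z = 1 by rewrite -(sqr_seminorm ipA_semi) z1 expr1n.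
set s := ipA (S z) z; set t := sqnorm ipA (S z); set q := sqnorm ipA (sharp (S z)).
have t_ge0 : 0 <= t := sqnorm_ge0 ipA_semi _.
have -> : normA (S z) ^+ 4 = t ^+ 2 by rewrite /t -(sqr_seminorm ipA_semi) -exprM.
have X1E : ipA (sharp (S z) + S z) z = t%:C + s.
  by rewrite (ipDl ipA_semi) ipA_sharpA (ip_selfE ipA_semi).
have X2E : ipA (S z) (sharp (S z)) = ipA (sharp (S (S z))) z.
  by rewrite (sip_conj ipA_semi (sharp (S z))) !ipA_sharpA -(sip_conj ipA_semi).
have ipA_z : ipA z (sharp (S z)) = t%:C.
  rewrite (sip_conj ipA_semi (sharp (S z))) ipA_sharpA.
  by rewrite (conjc_ip_self ipA_semi) (ip_selfE ipA_semi).
have X3E : Re (ipA (sharp (S (sharp (S z))) + sharp (S z)) z) = q + t.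
  rewrite (ipDl ipA_semi) !ipA_sharpA raddfD /=; congr (_ + _).
  by rewrite /q /sqnorm ipA_sharpA (sip_conj ipA_semi (S (sharp (S z)))) ReJ.
have X3_le : q + t <= normA (sharp (S (sharp (S z))) + sharp (S z)).
  rewrite -X3E; apply: le_trans (Re_le_normc _) _.
  by apply: le_trans (cauchy_schwarz ipA_semi _ _) _; rewrite z1 mulr1.
have := buzano ipA_semi (S z) (sharp (S z)) sqz.
rewrite -/s ipA_z normc_real ger0_norm // X2E => buz.
have amgm : 2 * (normA (S z) * normA (sharp (S z))) <= t + q.
  have := sqr_ge0 (normA (S z) - normA (sharp (S z))).
  by rewrite sqrrB !(sqr_seminorm ipA_semi) -/t -/q mulr2n; lra.
by have := normc_sqr_le_addr s t_ge0; rewrite -X1E; lra.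
Qed.

End BAOperator.

Unset Implicit Arguments.
Theorem corollary2p3 (R : realType) (V : lmodType R[i]) (ip : V -> V -> R[i])
  (A S : V -> V) :
  is_hilbert ip -> positive_op ip A -> in_BA ip A S ->
  dnumradA ip A S ^+ 2 <=
    numradA ip A (fun x => sharpA ip A S (S x) + S x) ^+ 2
    + numradA ip A (fun x => sharpA ip A S (S (S x)))
    + 2^-1 * opnormA ip A (fun x => sharpA ip A S (S (sharpA ip A S (S x))) + sharpA ip A S (S x)).
Proof.
move=> ip_hilbert A_pos S_BA.
have ipA_semi := ipA_semi ip_hilbert.1 A_pos.
have S_bnd := ipA_S_bounded ip_hilbert A_pos S_BA.
have sharp_bnd := ipA_sharpA_bounded ip_hilbert A_pos S_BA.
have SS_bnd := seminorm_bounded_comp sharp_bnd S_bnd.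
have X1_bnd : seminorm_bounded (ipA ip A) (fun x => sharpA ip A S (S x) + S x).
  exact (seminorm_boundedD ipA_semi SS_bnd S_bnd).
have X2_bnd : seminorm_bounded (ipA ip A) (fun x => sharpA ip A S (S (S x))).
  exact (seminorm_bounded_comp SS_bnd S_bnd).
have X3_bnd : seminorm_bounded (ipA ip A)
    (fun x => sharpA ip A S (S (sharpA ip A S (S x))) + sharpA ip A S (S x)).
  exact (seminorm_boundedD ipA_semi (seminorm_bounded_comp SS_bnd SS_bnd) SS_bnd).
apply: dnumradA_sqr_le => [|z z1].
  by rewrite !addr_ge0 ?sqr_ge0 ?mulr_ge0 ?numradA_ge0 ?opnormA_ge0 ?invr_ge0.
apply: le_trans (dnumradA_summand_le ip_hilbert A_pos S_BA z1) _.
have /= w1 := numradA_ge ipA_semi X1_bnd z1.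
have /= w2 := numradA_ge ipA_semi X2_bnd z1.
have /= w3 := opnormA_ge X3_bnd z1.
apply: lerD; last by rewrite ler_wpM2l ?invr_ge0.
by apply: lerD => //; apply: lerXn2r => //; rewrite nnegrE ?normc_ge0 ?numradA_ge0.
Qed.
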